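(* Let $\alpha\ge6$ and $f_\alpha(y)=\sum_{k,l\in\mathbb{Z}}e^{-\pi\alpha\phi_{k,l}(y)}$. Then $f_\alpha''(y)<0$ for all $y\in\big[\tfrac{\sqrt3}2,\tfrac{\sqrt3}2+\tfrac1{3\sqrt\alpha}\big]$.
   Context: For $y>0$ and $(k,l)\in\mathbb{Z}^2$: $\phi_{k,l}(y)=\frac{(2k+l+1)^2}{4y}+y\big(l+\frac12-\frac1{8y^2}\big)^2$. *)

From Stdlib Require Import Reals ZArith Lra.
From Coquelicot Require Import Coquelicot.
Open Scope R_scope.

Definition phi (k l : Z) (y : R) : R :=
  (2 * IZR k + IZR l + 1) ^ 2 / (4 * y)
  + y * (IZR l + 1 / 2 - 1 / (8 * y ^ 2)) ^ 2.

(* A bijection nat -> Z: 0,1,2,3,4,... |-> 0,-1,1,-2,2,... *)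
Definition z_enum (n : nat) : Z :=
  if Nat.even n then Z.of_nat (Nat.div2 n) else (- Z.of_nat (Nat.div2 (S n)))%Z.

(* f_alpha(y) = sum_{k,l in Z} exp(-pi alpha phi_{k,l}(y)); the terms are
   positive and summable for y > 0, so the (iterated) sum along the
   enumeration z_enum equals the unordered double sum over Z^2. *)
Definition f_alpha (alpha y : R) : R :=
  Series (fun n => Series (fun m =>
    exp (- PI * alpha * phi (z_enum n) (z_enum m) y))).

From Stdlib Require Import Reals ZArith Lra Lia Psatz Classical FunctionalExtensionality.
From Coquelicot Require Import Coquelicot.
Open Scope R_scope.

(* With A = 2k + l + 1 and B = l + 1/2, expanding the square gives
     phi_{k,l}(y) = phi_main(y) + P / (4y) + Q y,
     phi_main(y) = 1/(8y) + y/4 + 1/(64 y^3),  P = A^2 - l - 1,  Q = l (l + 1),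
   with integers P, Q that vanish exactly at the three lattice points (0,0), (-1,0), (0,-1)
   and make P/(4y) + Q y grow linearly in |k| + |l| elsewhere.  Each of the three main
   terms has second derivative (-pi alpha phi_main'' + (pi alpha phi_main')^2) e^(-pi alpha
   phi_main).  As phi_main' vanishes at sqrt 3 / 2, on an interval of length 1/(3 sqrt alpha)
   the square is dominated by pi alpha phi_main'', and each main term is at most
   -0.15 pi alpha e^(-pi alpha phi_main).  Every other term, together with its first two
   derivatives, is bounded by e^(-pi alpha phi_main) times a geometric double series of ratio
   e^(-0.3 pi) with a tiny leading coefficient; this domination both justifies termwise
   differentiation and makes the remaining terms negligible against the main ones. *)

(** * Termwise differentiation of dominated series *)

Lemma Series_split (u : nat -> R) (N : nat) : ex_series u ->
  Series u = sum_n u N + Series (fun k => u (S N + k)%nat).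
Proof.
  intros Hu. rewrite (Series_incr_n u (S N)) by (lia || exact Hu).
  now rewrite sum_n_Reals.
Qed.

Lemma Series_tail_lt (u : nat -> R) (eps : R) : ex_series u -> 0 < eps ->
  exists N, Rabs (Series (fun k => u (S N + k)%nat)) < eps.
Proof.
  intros Hu Heps.
  destruct (proj1 (filterlim_locally _ _) (Series_correct u Hu) (mkposreal eps Heps))
    as [N HN].
  exists N. specialize (HN N (le_n _)).
  rewrite (Series_split u N Hu) in HN.
  revert HN. unfold ball; simpl; unfold AbsRing_ball, abs, minus, plus, opp; simpl.
  intros HN. eapply Rle_lt_trans; [|exact HN].
  right. rewrite <- Rabs_Ropp. f_equal.
  change (sum_n u N) with (sum_n (G := R_AbelianMonoid) u N). lra.
Qed.

Lemma Rabs_Series_le (u v : nat -> R) : (forall n, Rabs (u n) <= v n) -> ex_series v ->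
  Rabs (Series u) <= Series v.
Proof.
  intros Huv Hv. eapply Rle_trans; [apply Series_Rabs|].
  - apply (@ex_series_le R_AbsRing R_CompleteNormedModule _ v); [intros n; rewrite Rabs_Rabsolu; apply Huv | exact Hv].
  - apply Series_le; [intros n; split; [apply Rabs_pos | apply Huv] | exact Hv].
Qed.

Lemma Rabs_sub_le_of_is_derive (f df : R -> R) (lo hi K x z : R) :
  (forall t, lo < t < hi -> is_derive f t (df t)) ->
  (forall t, lo < t < hi -> Rabs (df t) <= K) ->
  lo < x < hi -> lo < z < hi -> Rabs (f z - f x) <= K * Rabs (z - x).
Proof.
  intros Hd Hb Hx Hz.
  assert (Hin : forall t, Rmin x z <= t <= Rmax x z -> lo < t < hi).
  { intros t Ht. unfold Rmin, Rmax in Ht. destruct (Rle_dec x z); lra. }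
  destruct (MVT_gen f x z df) as [c [Hc ->]].
  - intros t Ht. apply Hd, Hin. lra.
  - intros t Ht. apply continuity_pt_filterlim, (ex_derive_continuous f t).
    exists (df t). apply Hd, Hin, Ht.
  - rewrite Rabs_mult. apply Rmult_le_compat_r; [apply Rabs_pos|]. apply Hb, Hin, Hc.
Qed.

Section TermwiseDerivative.

Variables (g d : nat -> R -> R) (M : nat -> R) (lo hi : R).
Hypothesis g_derive : forall n z, lo < z < hi -> is_derive (g n) z (d n z).
Hypothesis d_bound : forall n z, lo < z < hi -> Rabs (d n z) <= M n.
Hypothesis M_summable : ex_series M.
Hypothesis g_summable : forall z, lo < z < hi -> ex_series (fun n => g n z).

Lemma d_summable z : lo < z < hi -> ex_series (fun n => d n z).
Proof. intros Hz. apply (@ex_series_le R_AbsRing R_CompleteNormedModule _ M); [intros n; apply d_bound, Hz | exact M_summable]. Qed.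

Lemma Rabs_increment_le n x z : lo < x < hi -> lo < z < hi ->
  Rabs (g n z - g n x - (z - x) * d n x) <= 2 * Rabs (z - x) * M n.
Proof.
  intros Hx Hz.
  pose proof (Rabs_sub_le_of_is_derive (g n) (d n) lo hi (M n) x z
    (g_derive n) (d_bound n) Hx Hz) as Hmvt.
  assert (Hdx : Rabs (z - x) * Rabs (d n x) <= Rabs (z - x) * M n)
    by (apply Rmult_le_compat_l; [apply Rabs_pos | apply d_bound, Hx]).
  eapply Rle_trans; [apply Rabs_triang|]. rewrite Rabs_Ropp, Rabs_mult. lra.
Qed.

Lemma Rabs_tail_increment_le N x z : lo < x < hi -> lo < z < hi ->
  Rabs (Series (fun k => g (S N + k)%nat z) - Series (fun k => g (S N + k)%nat x)
        - (z - x) * Series (fun k => d (S N + k)%nat x))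
  <= 2 * Rabs (z - x) * Series (fun k => M (S N + k)%nat).
Proof.
  intros Hx Hz.
  pose proof (proj1 (ex_series_incr_n _ (S N)) (g_summable z Hz)) as Egz.
  pose proof (proj1 (ex_series_incr_n _ (S N)) (g_summable x Hx)) as Egx.
  pose proof (proj1 (ex_series_incr_n _ (S N)) (d_summable x Hx)) as Edx.
  pose proof (proj1 (ex_series_incr_n _ (S N)) M_summable) as EM.
  rewrite <- Series_scal_l, <- 2!Series_minus, <- Series_scal_l;
    try apply (ex_series_minus _ _ Egz Egx); try apply (ex_series_scal_l _ _ Edx);
    try assumption.
  apply Rabs_Series_le; [intros k; apply Rabs_increment_le; assumption |].
  apply (ex_series_scal_l _ _ EM).
Qed.

(* The partial sum up to N is differentiable, and by the mean value theorem the tail beyond N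
   moves the difference quotient by at most twice the tail of M. *)
Lemma is_derive_Series x : lo < x < hi ->
  is_derive (fun z => Series (fun n => g n z)) x (Series (fun n => d n x)).
Proof.
  intros Hx. apply is_derive_Reals. intros eps Heps.
  destruct (Series_tail_lt M (eps / 4) M_summable) as [N HN]; [lra|].
  assert (HP : is_derive (fun z => sum_n (fun n => g n z) N) x (sum_n (fun n => d n x) N))
    by (apply (@is_derive_sum_n R_AbsRing R_NormedModule); intros k _; apply g_derive, Hx).
  destruct (proj1 (is_derive_Reals _ _ _) HP (eps / 2)) as [d1 Hd1]; [lra|].
  assert (Hdelta : 0 < Rmin d1 (Rmin (x - lo) (hi - x)))
    by (destruct d1; simpl; repeat apply Rmin_pos; lra).
  exists (mkposreal _ Hdelta). intros h Hh0 Hh. simpl in Hh.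
  pose proof (Rmin_l d1 (Rmin (x - lo) (hi - x))) as Hm1.
  pose proof (Rmin_r d1 (Rmin (x - lo) (hi - x))) as Hm2.
  pose proof (Rmin_l (x - lo) (hi - x)). pose proof (Rmin_r (x - lo) (hi - x)).
  assert (Hz : lo < x + h < hi) by (apply Rabs_def2 in Hh; lra).
  specialize (Hd1 h Hh0 ltac:(lra)).
  pose proof (Rabs_tail_increment_le N x (x + h) Hx Hz) as Htail.
  replace (x + h - x) with h in Htail by ring.
  rewrite (Series_split _ N (g_summable _ Hz)), (Series_split _ N (g_summable _ Hx)),
    (Series_split _ N (d_summable _ Hx)).
  set (Tz := Series (fun k => g (S N + k)%nat (x + h))) in *.
  set (Tx := Series (fun k => g (S N + k)%nat x)) in *.
  set (TD := Series (fun k => d (S N + k)%nat x)) in *.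
  set (TM := Series (fun k => M (S N + k)%nat)) in *.
  assert (Habs : 0 < Rabs h) by (apply Rabs_pos_lt, Hh0).
  assert (Htail' : Rabs ((Tz - Tx - h * TD) / h) <= 2 * TM).
  { unfold Rdiv. rewrite Rabs_mult, Rabs_inv.
    apply (Rmult_le_reg_r (Rabs h)); [exact Habs|].
    rewrite Rmult_assoc, Rinv_l by lra. lra. }
  assert (TM < eps / 4) by (apply Rabs_def2 in HN; lra).
  replace (_ / h - _) with ((sum_n (fun n => g n (x + h)) N - sum_n (fun n => g n x) N) / h
    - sum_n (fun n => d n x) N + (Tz - Tx - h * TD) / h) by (field; exact Hh0).
  eapply Rle_lt_trans; [apply Rabs_triang|]. lra.
Qed.

End TermwiseDerivative.

Lemma geom_dominated (u : nat -> R) (K q : R) : 0 <= q < 1 ->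
  (forall n, Rabs (u n) <= K * q ^ n) -> ex_series u /\ Rabs (Series u) <= K / (1 - q).
Proof.
  intros Hq Hu.
  assert (Hgeom : is_series (fun n => K * q ^ n) (K / (1 - q))).
  { apply (is_series_scal_l K (fun n => q ^ n)), is_series_geom. rewrite Rabs_right; lra. }
  split.
  - apply (@ex_series_le R_AbsRing R_CompleteNormedModule _ _ Hu). eexists; exact Hgeom.
  - rewrite <- (is_series_unique _ _ Hgeom). apply Rabs_Series_le; [exact Hu|].
    eexists; exact Hgeom.
Qed.

Lemma is_derive_Series_Series (G dG : nat -> nat -> R -> R) (K q lo hi x : R) :
  0 <= q < 1 ->
  (forall n m z, lo < z < hi -> is_derive (G n m) z (dG n m z)) ->
  (forall n m z, lo < z < hi -> Rabs (G n m z) <= K * q ^ n * q ^ m) ->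
  (forall n m z, lo < z < hi -> Rabs (dG n m z) <= K * q ^ n * q ^ m) ->
  lo < x < hi ->
  is_derive (fun z => Series (fun n => Series (fun m => G n m z))) x
    (Series (fun n => Series (fun m => dG n m x))).
Proof.
  intros Hq HG BG BdG Hx.
  assert (Hrow : forall (F : nat -> nat -> R -> R) n z,
    (forall n m z, lo < z < hi -> Rabs (F n m z) <= K * q ^ n * q ^ m) -> lo < z < hi ->
    ex_series (fun m => F n m z) /\ Rabs (Series (fun m => F n m z)) <= K / (1 - q) * q ^ n).
  { intros F n z BF Hz. replace (K / (1 - q) * q ^ n) with (K * q ^ n / (1 - q)) by (field; lra).
    apply geom_dominated; [exact Hq | intros m; apply BF, Hz]. }
  apply (is_derive_Series (fun n z => Series (fun m => G n m z))
    (fun n z => Series (fun m => dG n m z)) (fun n => K / (1 - q) * q ^ n) lo hi).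
  - intros n z Hz.
    apply (is_derive_Series (fun m => G n m) (fun m => dG n m) (fun m => K * q ^ n * q ^ m)
      lo hi); try assumption.
    + intros m t Ht. apply HG, Ht.
    + intros m t Ht. apply BdG, Ht.
    + apply geom_dominated with (K := K * q ^ n) (q := q); [exact Hq|].
      intros m. rewrite Rabs_right; [lra|]. apply Rle_ge.
      apply (Rle_trans _ _ _ (Rabs_pos _) (BG n m z Hz)).
    + intros t Ht. apply (Hrow G n t BG Ht).
  - intros n z Hz. apply (Hrow dG n z BdG Hz).
  - apply geom_dominated with (K := K / (1 - q)) (q := q); [exact Hq|].
    intros n. rewrite Rabs_right; [lra|]. apply Rle_ge.
    apply (Rle_trans _ _ _ (Rabs_pos _) (proj2 (Hrow G n x BG Hx))).
  - intros z Hz. apply geom_dominated with (K := K / (1 - q)) (q := q); [exact Hq|].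
    intros n. apply (Hrow G n z BG Hz).
  - exact Hx.
Qed.

(** * The exponent and its derivatives *)

Definition phi_main (y : R) : R := 1 / (8 * y) + y / 4 + 1 / (64 * y ^ 3).
Definition phi_main' (y : R) : R := - 1 / (8 * y ^ 2) + 1 / 4 - 3 / (64 * y ^ 4).
Definition phi_main'' (y : R) : R := 1 / (4 * y ^ 3) + 3 / (16 * y ^ 5).

Definition pcoef (k l : Z) : Z := ((2 * k + l + 1) ^ 2 - l - 1)%Z.
Definition qcoef (l : Z) : Z := (l * (l + 1))%Z.

Definition phi_rest (k l : Z) (y : R) : R := IZR (pcoef k l) / (4 * y) + IZR (qcoef l) * y.
Definition phi' (k l : Z) (y : R) : R :=
  phi_main' y - IZR (pcoef k l) / (4 * y ^ 2) + IZR (qcoef l).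
Definition phi'' (k l : Z) (y : R) : R := phi_main'' y + IZR (pcoef k l) / (2 * y ^ 3).

Lemma IZR_pcoef k l : IZR (pcoef k l) = (2 * IZR k + IZR l + 1) ^ 2 - IZR l - 1.
Proof. unfold pcoef. rewrite Z.pow_2_r, !minus_IZR, !mult_IZR, !plus_IZR, mult_IZR. simpl. ring. Qed.

Lemma IZR_qcoef l : IZR (qcoef l) = IZR l * (IZR l + 1).
Proof. unfold qcoef. now rewrite mult_IZR, plus_IZR. Qed.

Lemma phi_decomp k l y : 0 < y -> phi k l y = phi_main y + phi_rest k l y.
Proof.
  intros Hy. unfold phi, phi_main, phi_rest. rewrite IZR_pcoef, IZR_qcoef. field. lra.
Qed.

Lemma is_derive_phi k l y : 0 < y -> is_derive (phi k l) y (phi' k l y).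
Proof.
  intros Hy. unfold phi, phi', phi_main'. rewrite IZR_pcoef, IZR_qcoef. auto_derive.
  - repeat split; apply Rgt_not_eq; repeat apply Rmult_lt_0_compat; lra.
  - field. lra.
Qed.

Lemma is_derive_phi' k l y : 0 < y -> is_derive (phi' k l) y (phi'' k l y).
Proof.
  intros Hy. unfold phi', phi'', phi_main', phi_main''. auto_derive.
  - repeat split; apply Rgt_not_eq; repeat apply Rmult_lt_0_compat; lra.
  - field. lra.
Qed.

Definition term (c : R) (k l : Z) (y : R) : R := exp (c * phi k l y).
Definition term' (c : R) (k l : Z) (y : R) : R := c * phi' k l y * exp (c * phi k l y).
Definition term'' (c : R) (k l : Z) (y : R) : R :=
  (c * phi'' k l y + (c * phi' k l y) ^ 2) * exp (c * phi k l y).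

Lemma is_derive_exp_scal_phi c k l y : 0 < y ->
  is_derive (fun z => exp (c * phi k l z)) y (c * phi' k l y * exp (c * phi k l y)).
Proof.
  intros Hy.
  exact (is_derive_comp exp (fun z => c * phi k l z) y _ _
    (is_derive_exp _) (is_derive_scal _ _ c _ (is_derive_phi k l y Hy))).
Qed.

Lemma is_derive_term c k l y : 0 < y -> is_derive (term c k l) y (term' c k l y).
Proof. apply is_derive_exp_scal_phi. Qed.

Lemma is_derive_term' c k l y : 0 < y -> is_derive (term' c k l) y (term'' c k l y).
Proof.
  intros Hy. unfold term', term''.
  pose proof (is_derive_mult (fun z => c * phi' k l z) (fun z => exp (c * phi k l z)) y _ _
    (is_derive_scal _ _ c _ (is_derive_phi' k l y Hy)) (is_derive_exp_scal_phi c k l y Hy)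
    Rmult_comm) as H.
  replace ((c * phi'' k l y + (c * phi' k l y) ^ 2) * exp (c * phi k l y))
    with (plus (mult (c * phi'' k l y) (exp (c * phi k l y)))
               (mult (c * phi' k l y) (c * phi' k l y * exp (c * phi k l y))))
    by (unfold plus, mult; simpl; unfold mult; simpl; ring).
  exact H.
Qed.

Definition main_point (k l : Z) : Prop :=
  (k = 0 /\ l = 0)%Z \/ (k = -1 /\ l = 0)%Z \/ (k = 0 /\ l = -1)%Z.

Lemma coef_main_point k l : main_point k l -> pcoef k l = 0%Z /\ qcoef l = 0%Z.
Proof. intros [[-> ->] | [[-> ->] | [-> ->]]]; split; reflexivity. Qed.

Lemma qcoef_nonneg l : (0 <= qcoef l)%Z.
Proof. unfold qcoef. nia. Qed.

Lemma pcoef_neg k l : (pcoef k l < 0)%Z -> (2 <= qcoef l /\ - pcoef k l <= qcoef l)%Z.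
Proof. unfold pcoef, qcoef. nia. Qed.

Lemma coef_growth k l : ~ main_point k l ->
  (350 <= 100 * pcoef k l + 289 * qcoef l
   /\ 162 * (Z.abs k + Z.abs l) <= 100 * pcoef k l + 289 * qcoef l)%Z.
Proof. unfold main_point, pcoef, qcoef. intros H. split; nia. Qed.

Lemma z_enum_spec n : (Z.of_nat n = 2 * z_enum n \/ Z.of_nat n = - 2 * z_enum n - 1)%Z.
Proof.
  unfold z_enum. pose proof (Nat.div2_odd n) as Hn. pose proof (Nat.div2_odd (S n)) as HSn.
  rewrite Nat.odd_succ, <- Nat.negb_odd in HSn. rewrite <- Nat.negb_odd.
  destruct (Nat.odd n); cbn [negb Nat.b2n] in *; lia.
Qed.

Lemma z_enum_abs n : (Z.of_nat n <= 2 * Z.abs (z_enum n))%Z.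
Proof. destruct (z_enum_spec n); lia. Qed.

Lemma main_point_z_enum n m : main_point (z_enum n) (z_enum m) ->
  (n = 0 /\ m = 0)%nat \/ (n = 1 /\ m = 0)%nat \/ (n = 0 /\ m = 1)%nat.
Proof.
  pose proof (z_enum_spec n). pose proof (z_enum_spec m). unfold main_point. lia.
Qed.

(** * Estimates for 0.85 <= y <= 1.01 *)

Lemma inv_window y : 17/20 <= y <= 101/100 -> 100/101 <= / y <= 20/17.
Proof.
  intros Hy. split.
  - replace (100/101) with (/ (101/100)) by field. apply Rinv_le_contravar; lra.
  - replace (20/17) with (/ (17/20)) by field. apply Rinv_le_contravar; lra.
Qed.

Lemma Rabs_phi_main'_le y : 17/20 <= y <= 101/100 -> Rabs (phi_main' y) <= 1/10.
Proof.
  intros Hy. pose proof (inv_window y Hy) as Hr.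
  replace (phi_main' y) with (- (/ y) ^ 2 / 8 + 1/4 - 3 * (/ y) ^ 4 / 64)
    by (unfold phi_main'; field; lra).
  set (r := / y) in *.
  assert (r ^ 2 >= (100/101) ^ 2) by nra. assert (r ^ 2 <= (20/17) ^ 2) by nra.
  assert (r ^ 4 = r ^ 2 * r ^ 2) by ring.
  assert (r ^ 4 >= (100/101) ^ 4) by nra. assert (r ^ 4 <= (20/17) ^ 4) by nra.
  apply Rabs_le. lra.
Qed.

Lemma phi_main''_window y : 17/20 <= y <= 101/100 -> 0 <= phi_main'' y <= 85/100.
Proof.
  intros Hy. pose proof (inv_window y Hy) as Hr.
  replace (phi_main'' y) with ((/ y) ^ 3 / 4 + 3 * (/ y) ^ 5 / 16)
    by (unfold phi_main''; field; lra).
  set (r := / y) in *.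
  assert (r ^ 3 <= (20/17) ^ 3) by (apply pow_incr; lra).
  assert (r ^ 5 <= (20/17) ^ 5) by (apply pow_incr; lra).
  assert (0 <= r ^ 3) by (apply pow_le; lra). assert (0 <= r ^ 5) by (apply pow_le; lra).
  lra.
Qed.

Lemma coef_facts k l : ~ main_point k l ->
  0 <= IZR (qcoef l)
  /\ (IZR (pcoef k l) < 0 -> 2 <= IZR (qcoef l) /\ - IZR (pcoef k l) <= IZR (qcoef l))
  /\ 350 <= 100 * IZR (pcoef k l) + 289 * IZR (qcoef l).
Proof.
  intros Hkl. split; [|split].
  - apply IZR_le, qcoef_nonneg.
  - intros HP. apply lt_IZR, pcoef_neg in HP. rewrite <- opp_IZR. split; apply IZR_le, HP.
  - rewrite <- !mult_IZR, <- plus_IZR. apply IZR_le, coef_growth, Hkl.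
Qed.

Section RestWindow.

Variables (k l : Z) (y : R).
Hypothesis y_window : 17/20 <= y <= 101/100.
Hypothesis not_main : ~ main_point k l.

Let P := IZR (pcoef k l).
Let Q := IZR (qcoef l).

Lemma phi_rest_eq : phi_rest k l y = P * / y / 4 + Q * y.
Proof. unfold phi_rest, P, Q. field. lra. Qed.

Lemma phi_rest_lower : (100 * P + 289 * Q) / 404 <= phi_rest k l y.
Proof.
  destruct (coef_facts k l not_main) as [HQ [_ HPQ]]. fold P Q in HQ, HPQ.
  pose proof (inv_window y y_window) as Hr. rewrite phi_rest_eq. set (r := / y) in *.
  assert (Q * y >= Q * (17/20)) by nra.
  destruct (Rle_or_lt 0 P) as [HP | HP].
  - assert (P * r >= P * (100/101)) by nra. lra.
  - assert (P * r >= P * (20/17)) by nra. lra.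
Qed.

Lemma phi_rest_window : 85/100 <= phi_rest k l y.
Proof.
  pose proof phi_rest_lower. destruct (coef_facts k l not_main) as [_ [_ HPQ]].
  fold P Q in HPQ. lra.
Qed.

Lemma Rabs_phi'_le : Rabs (phi' k l y) <= 3 * phi_rest k l y.
Proof.
  destruct (coef_facts k l not_main) as [HQ [HPn _]]. fold P Q in HQ, HPn.
  pose proof (inv_window y y_window) as Hr. pose proof phi_rest_window as Hw.
  pose proof (Rabs_phi_main'_le y y_window) as Hh. apply Rabs_le_between in Hh.
  replace (phi' k l y) with (phi_main' y - P * (/ y) ^ 2 / 4 + Q)
    by (unfold phi', P, Q; field; lra).
  rewrite phi_rest_eq in *. set (r := / y) in *.
  assert (Q * y >= Q * (17/20)) by nra.
  apply Rabs_le. destruct (Rle_or_lt 0 P) as [HP | HP].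
  - assert (P * r >= 0) by nra. assert (P * r * r <= P * r * (20/17)) by nra.
    assert (P * r * r >= 0) by nra. assert (P * r ^ 2 = P * r * r) by ring.
    split; lra.
  - destruct (HPn HP) as [HQ2 HPQ].
    assert (P * r >= - Q * (20/17)) by nra. assert (P * r ^ 2 >= - Q * (20/17) ^ 2) by nra.
    assert (P * r ^ 2 <= 0) by nra.
    split; lra.
Qed.

Lemma Rabs_phi''_le : Rabs (phi'' k l y) <= 4 * phi_rest k l y.
Proof.
  destruct (coef_facts k l not_main) as [HQ [HPn _]]. fold P Q in HQ, HPn.
  pose proof (inv_window y y_window) as Hr. pose proof phi_rest_window as Hw.
  pose proof (phi_main''_window y y_window) as Hh.
  replace (phi'' k l y) with (phi_main'' y + P * (/ y) ^ 3 / 2)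
    by (unfold phi'', P; field; lra).
  rewrite phi_rest_eq in *. set (r := / y) in *.
  assert (0 < r ^ 2) by nra. assert (r ^ 2 <= (20/17) ^ 2) by nra.
  assert (P * r ^ 3 = P * r * r ^ 2) by ring.
  apply Rabs_le. destruct (Rle_or_lt 0 P) as [HP | HP].
  - assert (Q * y >= 0) by nra. assert (P * r >= 0) by nra.
    assert (P * r * r ^ 2 <= P * r * (20/17) ^ 2) by nra. assert (0 <= P * r * r ^ 2) by nra.
    split; lra.
  - destruct (HPn HP) as [HQ2 HPQ].
    assert (Q * y >= Q * (17/20)) by nra. assert (P * r >= - Q * (20/17)) by nra.
    assert (P * r * r ^ 2 >= - Q * (20/17) * (20/17) ^ 2) by nra.
    assert (P * r <= 0) by nra. assert (P * r * r ^ 2 <= 0) by nra.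
    split; lra.
Qed.

End RestWindow.

Lemma PI_ge_314 : 3.14 <= PI.
Proof.
  destruct (PI_2_3_7_ineq 1) as [H _].
  simpl in H. unfold tg_alt, PI_2_3_7_tg, Ratan_seq in H. simpl in H. lra.
Qed.

Lemma exp_le_compat x y : x <= y -> exp x <= exp y.
Proof.
  intros [Hlt | ->]; [apply Rlt_le, exp_increasing, Hlt | apply Rle_refl].
Qed.

Lemma exp_mult_INR n x : exp (INR n * x) = exp x ^ n.
Proof.
  induction n as [|n IH].
  - now rewrite Rmult_0_l, exp_0.
  - rewrite S_INR, Rmult_plus_distr_r, Rmult_1_l, exp_plus, IH. simpl. ring.
Qed.

Lemma pow8_le_exp x : 0 <= x -> (1 + x / 8) ^ 8 <= exp x.
Proof.
  intros Hx. replace x with (INR 8 * (x / 8)) at 2 by (simpl; field).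
  rewrite exp_mult_INR. apply pow_incr. split; [lra | apply exp_ineq1_le].
Qed.

Lemma sqr_le_exp_quarter x : 0 <= x -> x ^ 2 <= 64 * exp (x / 4).
Proof.
  intros Hx. replace (x / 4) with (x / 8 + x / 8) by field. rewrite exp_plus.
  pose proof (exp_ineq1_le (x / 8)). nra.
Qed.

Lemma exp_neg_mul_sqr_le x : 0 <= x -> exp (- x) * (10 * x ^ 2) <= 640 * exp (- (3/4 * x)).
Proof.
  intros Hx. pose proof (sqr_le_exp_quarter x Hx).
  assert (Hsplit : exp (- x) * exp (x / 4) = exp (- (3/4 * x)))
    by (rewrite <- exp_plus; f_equal; field).
  pose proof (exp_pos (- x)). nra.
Qed.

(* For a >= 6 pi and phi_rest = w with w >= 0.85 and n + m <= 5 w, the decay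
   e^(-(3/4) a w) is at most [gap * rho ^ n * rho ^ m]. *)
Definition rho : R := exp (- (3/10 * PI)).
Definition gap : R := exp (- (255/100 * PI)).

Lemma inv_exp_le (x b : R) : 0 < b -> 1 <= b * exp x -> exp (- x) <= b.
Proof.
  intros Hb H. rewrite exp_Ropp. pose proof (exp_pos x).
  apply (Rmult_le_reg_r (exp x)); [lra|]. rewrite Rinv_l by lra. lra.
Qed.

Lemma rho_bounds : 0 < rho <= 42/100.
Proof.
  split; [apply exp_pos|]. pose proof PI_ge_314.
  apply inv_exp_le; [lra|].
  assert ((1 + 942/8000) ^ 8 <= (1 + 3/10 * PI / 8) ^ 8) by (apply pow_incr; lra).
  pose proof (pow8_le_exp (3/10 * PI) ltac:(lra)). simpl in *. lra.
Qed.

Lemma gap_bounds : 0 < gap <= 1/256.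
Proof.
  split; [apply exp_pos|]. pose proof PI_ge_314.
  apply inv_exp_le; [lra|].
  assert ((1 + 1) ^ 8 <= (1 + 255/100 * PI / 8) ^ 8) by (apply pow_incr; lra).
  pose proof (pow8_le_exp (255/100 * PI) ltac:(lra)). simpl in *. lra.
Qed.

Lemma exp_gap_rho n m :
  exp (- (255/100 * PI + 3/10 * PI * (INR n + INR m))) = gap * rho ^ n * rho ^ m.
Proof. unfold gap, rho. rewrite <- !exp_mult_INR, <- !exp_plus. f_equal. ring. Qed.

(** * Domination of the terms *)

Definition term_derivs_le (c : R) (k l : Z) (y B : R) : Prop :=
  Rabs (term c k l y) <= B /\ Rabs (term' c k l y) <= B /\ Rabs (term'' c k l y) <= B.

(* The entry 1 accounts for [term] itself. *)
Definition jet_size (c : R) (k l : Z) (y : R) : R :=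
  Rmax 1 (Rmax (Rabs (c * phi' k l y)) (Rabs (c * phi'' k l y + (c * phi' k l y) ^ 2))).

Lemma term_derivs_le_of_jet c k l y B :
  exp (c * phi k l y) * jet_size c k l y <= B -> term_derivs_le c k l y B.
Proof.
  unfold term_derivs_le, term, term', term'', jet_size. intros HB.
  pose proof (exp_pos (c * phi k l y)) as He.
  set (E := exp (c * phi k l y)) in *. set (u := Rabs (c * phi' k l y)) in *.
  set (v := Rabs (c * phi'' k l y + (c * phi' k l y) ^ 2)) in *.
  set (J := Rmax 1 (Rmax u v)) in *.
  assert (H1 : E * 1 <= E * J) by (apply Rmult_le_compat_l; [lra | apply Rmax_l]).
  assert (Hu : E * u <= E * J).
  { apply Rmult_le_compat_l; [lra|].
    apply (Rle_trans _ (Rmax u v)); [apply Rmax_l | apply Rmax_r]. }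
  assert (Hv : E * v <= E * J).
  { apply Rmult_le_compat_l; [lra|].
    apply (Rle_trans _ (Rmax u v)); [apply Rmax_r | apply Rmax_r]. }
  rewrite Rabs_mult with (x := c * phi' k l y), Rabs_mult with (y := E), (Rabs_right E) by lra.
  fold u v. split; [|split]; lra.
Qed.

Lemma term_derivs_le_weaken c k l y B B' :
  B <= B' -> term_derivs_le c k l y B -> term_derivs_le c k l y B'.
Proof. unfold term_derivs_le. lra. Qed.

Lemma phi_main_point k l y : main_point k l -> 0 < y ->
  phi k l y = phi_main y /\ phi' k l y = phi_main' y /\ phi'' k l y = phi_main'' y.
Proof.
  intros Hkl Hy. destruct (coef_main_point k l Hkl) as [HP HQ].
  rewrite (phi_decomp k l y Hy). unfold phi_rest, phi', phi''. rewrite HP, HQ.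
  split; [|split]; field; lra.
Qed.

Lemma phi_main_pos y : 0 < y -> 0 < phi_main y.
Proof.
  intros Hy. unfold phi_main. assert (0 < y ^ 3) by (apply pow_lt; lra).
  assert (0 < 1 / (8 * y)) by (apply Rdiv_lt_0_compat; lra).
  assert (0 < 1 / (64 * y ^ 3)) by (apply Rdiv_lt_0_compat; lra). lra.
Qed.

Lemma exp_neg_phi_main_le a y : 0 <= a -> 0 < y -> exp (- a * phi_main y) <= 1.
Proof.
  intros Ha Hy. rewrite <- exp_0. apply exp_le_compat.
  pose proof (phi_main_pos y Hy). nra.
Qed.

Lemma term_derivs_le_main a k l y : 0 <= a -> 17/20 <= y <= 101/100 -> main_point k l ->
  term_derivs_le (- a) k l y (1 + a + a ^ 2).
Proof.
  intros Ha Hy Hkl. apply term_derivs_le_of_jet. unfold jet_size.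
  destruct (phi_main_point k l y Hkl ltac:(lra)) as [-> [-> ->]].
  pose proof (Rabs_phi_main'_le y Hy) as H1. apply Rabs_le_between in H1.
  pose proof (phi_main''_window y Hy) as H2.
  pose proof (exp_pos (- a * phi_main y)). pose proof (exp_neg_phi_main_le a y Ha ltac:(lra)).
  set (J := Rmax 1 _).
  assert (HJ1 : 1 <= J) by apply Rmax_l.
  assert (HJ : J <= 1 + a + a ^ 2).
  { assert (- a <= a * phi_main' y <= a) by (split; nra).
    assert ((- a * phi_main' y) ^ 2 <= a ^ 2) by nra.
    assert (0 <= a * phi_main'' y <= a) by (split; nra).
    pose proof (pow2_ge_0 (- a * phi_main' y)).
    apply Rmax_lub; [nra|]. apply Rmax_lub; apply Rabs_le; split; nra. }
  nra.
Qed.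

Lemma jet_size_rest_le a k l y : 6 * PI <= a -> 17/20 <= y <= 101/100 -> ~ main_point k l ->
  jet_size (- a) k l y <= 10 * (a * phi_rest k l y) ^ 2.
Proof.
  intros Ha Hy Hkl. pose proof PI_ge_314.
  pose proof (phi_rest_window k l y Hy Hkl) as Hw.
  pose proof (Rabs_phi'_le k l y Hy Hkl) as H1.
  pose proof (Rabs_phi''_le k l y Hy Hkl) as H2.
  set (w := phi_rest k l y) in *. set (x := a * w).
  assert (Hx : 16 <= x) by (unfold x; nra).
  assert (A1 : Rabs (- a * phi' k l y) <= 3 * x).
  { rewrite Rabs_mult, Rabs_Ropp, (Rabs_right a) by lra. unfold x. nra. }
  assert (A2 : Rabs (- a * phi'' k l y) <= 4 * x).
  { rewrite Rabs_mult, Rabs_Ropp, (Rabs_right a) by lra. unfold x. nra. }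
  assert (A3 : (- a * phi' k l y) ^ 2 <= (3 * x) ^ 2)
    by (rewrite <- pow2_abs; apply pow_incr; split; [apply Rabs_pos | exact A1]).
  pose proof (Rabs_triang (- a * phi'' k l y) ((- a * phi' k l y) ^ 2)) as A4.
  rewrite (Rabs_right ((- a * phi' k l y) ^ 2)) in A4 by (apply Rle_ge, pow2_ge_0).
  unfold jet_size. fold w x.
  assert (4 * x <= x ^ 2) by nra.
  apply Rmax_lub; [nra|]. apply Rmax_lub; nra.
Qed.

Lemma index_le_phi_rest n m y : 17/20 <= y <= 101/100 -> ~ main_point (z_enum n) (z_enum m) ->
  INR n + INR m <= 5 * phi_rest (z_enum n) (z_enum m) y.
Proof.
  intros Hy Hnm.
  pose proof (phi_rest_lower _ _ y Hy Hnm) as Hw.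
  pose proof (phi_rest_window _ _ y Hy Hnm) as Hw0.
  assert (Hint : (81 * (Z.of_nat n + Z.of_nat m)
      <= 100 * pcoef (z_enum n) (z_enum m) + 289 * qcoef (z_enum m))%Z).
  { pose proof (z_enum_abs n). pose proof (z_enum_abs m).
    pose proof (proj2 (coef_growth _ _ Hnm)). lia. }
  apply IZR_le in Hint. rewrite plus_IZR, !mult_IZR, plus_IZR, <- !INR_IZR_INZ in Hint.
  lra.
Qed.

Lemma term_derivs_le_rest a n m y : 6 * PI <= a -> 17/20 <= y <= 101/100 ->
  ~ main_point (z_enum n) (z_enum m) ->
  term_derivs_le (- a) (z_enum n) (z_enum m) y
    (exp (- a * phi_main y) * (640 * gap) * rho ^ n * rho ^ m).
Proof.
  intros Ha Hy Hnm. apply term_derivs_le_of_jet. pose proof PI_ge_314.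
  pose proof (jet_size_rest_le a _ _ y Ha Hy Hnm) as HJ.
  pose proof (index_le_phi_rest n m y Hy Hnm) as Hnm_le.
  pose proof (phi_rest_window _ _ y Hy Hnm) as Hw.
  rewrite (phi_decomp _ _ y ltac:(lra)), Rmult_plus_distr_l, exp_plus.
  set (w := phi_rest (z_enum n) (z_enum m) y) in *.
  assert (Hdecay : exp (- (a * w)) * (10 * (a * w) ^ 2) <= 640 * gap * rho ^ n * rho ^ m).
  { rewrite Rmult_assoc, Rmult_assoc, <- (Rmult_assoc gap), <- exp_gap_rho.
    eapply Rle_trans; [apply exp_neg_mul_sqr_le; nra|].
    apply Rmult_le_compat_l; [lra|]. apply exp_le_compat. nra. }
  pose proof (exp_pos (- a * phi_main y)).
  assert (0 < exp (- a * w)) by apply exp_pos.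
  replace (- a * w) with (- (a * w)) in * by ring.
  replace (exp (- a * phi_main y) * (640 * gap) * rho ^ n * rho ^ m)
    with (exp (- a * phi_main y) * (640 * gap * rho ^ n * rho ^ m)) by ring.
  rewrite Rmult_assoc. apply Rmult_le_compat_l; [lra|].
  eapply Rle_trans; [|exact Hdecay]. apply Rmult_le_compat_l; lra.
Qed.

Definition dom_const (a : R) : R := 640 * gap + (1 + a + a ^ 2) / rho.

Lemma term_derivs_le_geom a n m y : 6 * PI <= a -> 17/20 <= y <= 101/100 ->
  term_derivs_le (- a) (z_enum n) (z_enum m) y (dom_const a * rho ^ n * rho ^ m).
Proof.
  intros Ha Hy. pose proof PI_ge_314. pose proof rho_bounds. pose proof gap_bounds.
  assert (Hnm : 0 < rho ^ n * rho ^ m) by (apply Rmult_lt_0_compat; apply pow_lt; lra).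
  set (D := (1 + a + a ^ 2) / rho).
  assert (HD : D * rho = 1 + a + a ^ 2) by (unfold D; field; lra).
  assert (0 <= D) by (apply Rlt_le, Rdiv_lt_0_compat; nra).
  unfold dom_const. fold D. rewrite Rmult_assoc.
  destruct (classic (main_point (z_enum n) (z_enum m))) as [Hm | Hm].
  - eapply term_derivs_le_weaken; [|apply term_derivs_le_main; [lra | exact Hy | exact Hm]].
    assert (Hrho : rho <= rho ^ n * rho ^ m).
    { destruct (main_point_z_enum n m Hm) as [[-> ->] | [[-> ->] | [-> ->]]]; simpl; lra. }
    nra.
  - eapply term_derivs_le_weaken; [|exact (term_derivs_le_rest a n m y Ha Hy Hm)].
    pose proof (exp_neg_phi_main_le a y ltac:(lra) ltac:(lra)).
    replace (exp (- a * phi_main y) * (640 * gap) * rho ^ n * rho ^ m)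
      with (exp (- a * phi_main y) * (640 * gap * (rho ^ n * rho ^ m))) by ring.
    assert (0 < 640 * gap * (rho ^ n * rho ^ m)) by (apply Rmult_lt_0_compat; lra).
    nra.
Qed.

(** * The three main terms *)

(* [phi_main'] vanishes at sqrt 3 / 2, the left end of the interval of the theorem. *)
Lemma phi_main'_factor s y : s * s = 3 -> 0 < y ->
  phi_main' y = (y - s / 2) * ((2 * y + s) * (4 * y ^ 2 + 1) / (32 * y ^ 4)).
Proof.
  intros Hs Hy. unfold phi_main'. field_simplify_eq; [|lra].
  replace (s ^ 2) with 3 by (rewrite <- Hs; ring). ring.
Qed.

Lemma slope_window_bounds s y yl yh : 0 < yl -> yl <= y <= yh -> 0 <= s <= 17321/10000 ->
  (2 * y + s) * (4 * y ^ 2 + 1) / (32 * y ^ 4)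
    <= (2 * yh + 17321/10000) * (4 * yh ^ 2 + 1) / (32 * yl ^ 4)
  /\ phi_main'' yh <= phi_main'' y.
Proof.
  intros Hyl Hy Hs.
  assert (Hy4 : yl ^ 4 <= y ^ 4) by (apply pow_incr; lra).
  assert (0 < yl ^ 4) by (apply pow_lt; lra).
  split.
  - unfold Rdiv. apply Rmult_le_compat.
    + nra.
    + apply Rlt_le, Rinv_0_lt_compat. lra.
    + apply Rmult_le_compat; nra.
    + apply Rinv_le_contravar; lra.
  - unfold phi_main''. unfold Rdiv. rewrite !Rmult_1_l.
    assert (yh ^ 3 >= y ^ 3) by (apply Rle_ge, pow_incr; lra).
    assert (yh ^ 5 >= y ^ 5) by (apply Rle_ge, pow_incr; lra).
    assert (0 < y ^ 3) by (apply pow_lt; lra). assert (0 < y ^ 5) by (apply pow_lt; lra).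
    apply Rplus_le_compat.
    + apply Rinv_le_contravar; lra.
    + apply Rmult_le_compat_l; [lra|]. apply Rinv_le_contravar; lra.
Qed.

(* Crude monotone bounds, separately on [0.866, 0.935] and [0.935, 1.0022], suffice. *)
Lemma phi_main''_dominates s y : 1732/1000 <= s <= 17321/10000 -> s / 2 <= y <= 10022/10000 ->
  4/9 * ((2 * y + s) * (4 * y ^ 2 + 1) / (32 * y ^ 4)) ^ 2 <= phi_main'' y - 15/100.
Proof.
  intros Hs Hy.
  assert (HF0 : 0 <= (2 * y + s) * (4 * y ^ 2 + 1) / (32 * y ^ 4)).
  { apply Rmult_le_pos; [nra|]. apply Rlt_le, Rinv_0_lt_compat.
    assert (0 < y ^ 4) by (apply pow_lt; lra). lra. }
  destruct (Rle_or_lt y (935/1000)) as [Hy1 | Hy1].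
  - destruct (slope_window_bounds s y (866/1000) (935/1000)) as [HF Hh]; try lra.
    pose proof (pow_incr _ _ 2 (conj HF0 HF)) as HF2.
    unfold phi_main'' in *. lra.
  - destruct (slope_window_bounds s y (935/1000) (10022/10000)) as [HF Hh]; try lra.
    pose proof (pow_incr _ _ 2 (conj HF0 HF)) as HF2.
    unfold phi_main'' in *. lra.
Qed.

Lemma term''_main_le a s y k l : main_point k l -> s * s = 3 -> 1732/1000 <= s <= 17321/10000 ->
  s / 2 <= y <= 10022/10000 -> 0 < a -> a * (y - s / 2) ^ 2 <= 4/9 ->
  term'' (- a) k l y <= - (15/100 * a * exp (- a * phi_main y)).
Proof.
  intros Hkl Hs3 Hs Hy Ha Hat.
  pose proof (phi_main''_dominates s y Hs Hy) as Hdom.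
  unfold term''. destruct (phi_main_point k l y Hkl ltac:(lra)) as [-> [-> ->]].
  rewrite (phi_main'_factor s y Hs3 ltac:(lra)).
  set (F := (2 * y + s) * (4 * y ^ 2 + 1) / (32 * y ^ 4)) in *.
  set (t := y - s / 2) in *.
  assert (Hsq : a * (a * t ^ 2 * F ^ 2) <= a * (4/9 * F ^ 2))
    by (apply Rmult_le_compat_l; [lra | apply Rmult_le_compat_r; [apply pow2_ge_0 | exact Hat]]).
  rewrite Ropp_mult_distr_l. apply Rmult_le_compat_r; [apply Rlt_le, exp_pos|].
  replace ((- a * (t * F)) ^ 2) with (a * (a * t ^ 2 * F ^ 2)) by ring.
  nra.
Qed.

Lemma Series_le_geom (u : nat -> R) (C q : R) : 0 <= q < 1 ->
  (forall k, Rabs (u k) <= C * q ^ k) -> Series u <= C / (1 - q).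
Proof.
  intros Hq Hu. eapply Rle_trans; [apply Rle_abs | apply (geom_dominated u C q Hq Hu)].
Qed.

(* Through [z_enum], the indices with n + m <= 1 are the three main lattice points. *)
Section DominantCorner.

Variables (T : nat -> nat -> R) (K B M q : R).
Hypothesis q_range : 0 <= q < 1.
Hypothesis T_dominated : forall n m, Rabs (T n m) <= K * q ^ n * q ^ m.
Hypothesis T_far : forall n m, (2 <= n + m)%nat -> Rabs (T n m) <= B * q ^ n * q ^ m.

Lemma ex_series_row n : ex_series (fun m => T n m).
Proof. apply (geom_dominated _ (K * q ^ n) q q_range), T_dominated. Qed.

Lemma ex_series_rows : ex_series (fun n => Series (fun m => T n m)).
Proof.
  apply (geom_dominated _ (K / (1 - q)) q q_range). intros n.
  replace (K / (1 - q) * q ^ n) with (K * q ^ n / (1 - q)) by (field; lra).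
  apply (geom_dominated _ (K * q ^ n) q q_range), T_dominated.
Qed.

Lemma Series_Series_corner :
  Series (fun n => Series (fun m => T n m))
  = T 0 0 + T 0 1 + T 1 0 + Series (fun k => T 0 (S (S k))) + Series (fun k => T 1 (S k))
    + Series (fun k => Series (fun m => T (S (S k)) m)).
Proof.
  rewrite (Series_incr_1 _ ex_series_rows), (Series_incr_1 (fun k => Series (fun m => T (S k) m)))
    by apply (ex_series_incr_1 (fun n => Series (fun m => T n m))), ex_series_rows.
  rewrite (Series_incr_1 _ (ex_series_row 0)), (Series_incr_1 (fun k => T 0 (S k)))
    by apply (ex_series_incr_1 (fun m => T 0 m)), ex_series_row.
  rewrite (Series_incr_1 _ (ex_series_row 1)). ring.
Qed.

Lemma far_rows_le :
  Series (fun k => Series (fun m => T (S (S k)) m)) <= B * q ^ 2 / (1 - q) / (1 - q).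
Proof.
  apply Series_le_geom; [exact q_range|]. intros k.
  replace (B * q ^ 2 / (1 - q) * q ^ k) with (B * q ^ S (S k) / (1 - q)) by (simpl; field; lra).
  apply (geom_dominated _ (B * q ^ S (S k)) q q_range). intros m. apply T_far. lia.
Qed.

Lemma Series_Series_lt_0 :
  T 0 0 <= - M -> T 0 1 <= - M -> T 1 0 <= - M ->
  B * q ^ 2 * (2 / (1 - q) + 1 / (1 - q) ^ 2) < 3 * M ->
  Series (fun n => Series (fun m => T n m)) < 0.
Proof.
  intros H00 H01 H10 Hsmall. rewrite Series_Series_corner.
  assert (Hrow0 : Series (fun k => T 0 (S (S k))) <= B * q ^ 2 / (1 - q)).
  { apply Series_le_geom; [exact q_range|]. intros k.
    replace (B * q ^ 2 * q ^ k) with (B * q ^ 0 * q ^ S (S k)) by (simpl; ring).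
    apply T_far. lia. }
  assert (Hrow1 : Series (fun k => T 1 (S k)) <= B * q ^ 2 / (1 - q)).
  { apply Series_le_geom; [exact q_range|]. intros k.
    replace (B * q ^ 2 * q ^ k) with (B * q ^ 1 * q ^ S k) by (simpl; ring).
    apply T_far. lia. }
  pose proof far_rows_le.
  replace (B * q ^ 2 * (2 / (1 - q) + 1 / (1 - q) ^ 2))
    with (B * q ^ 2 / (1 - q) + B * q ^ 2 / (1 - q) + B * q ^ 2 / (1 - q) / (1 - q))
    in Hsmall by (field; lra).
  lra.
Qed.

End DominantCorner.

(** * The second derivative of f_alpha *)

Lemma f_alpha_term alpha :
  f_alpha alpha = fun y => Series (fun n => Series (fun m =>
    term (- (PI * alpha)) (z_enum n) (z_enum m) y)).
Proof.
  apply functional_extensionality. intros y. unfold f_alpha, term.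
  apply Series_ext. intros n. apply Series_ext. intros m. f_equal. ring.
Qed.

Lemma f_alpha_derive2 alpha y : 6 <= alpha -> 17/20 < y < 101/100 ->
  ex_derive_n (f_alpha alpha) 2 y
  /\ Derive_n (f_alpha alpha) 2 y
     = Series (fun n => Series (fun m => term'' (- (PI * alpha)) (z_enum n) (z_enum m) y)).
Proof.
  intros Halpha Hy. pose proof PI_ge_314. pose proof rho_bounds as Hrho.
  set (a := PI * alpha).
  assert (Ha : 6 * PI <= a) by (unfold a; nra).
  assert (Hdom : forall n m z, 17/20 < z < 101/100 ->
    term_derivs_le (- a) (z_enum n) (z_enum m) z (dom_const a * rho ^ n * rho ^ m))
    by (intros n m z Hz; apply term_derivs_le_geom; lra).
  set (F1 := fun z => Series (fun n => Series (fun m => term' (- a) (z_enum n) (z_enum m) z))).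
  assert (HF : forall z, 17/20 < z < 101/100 -> is_derive (f_alpha alpha) z (F1 z)).
  { intros z Hz. rewrite f_alpha_term.
    apply (is_derive_Series_Series (fun n m => term (- a) (z_enum n) (z_enum m))
      (fun n m => term' (- a) (z_enum n) (z_enum m)) (dom_const a) rho (17/20) (101/100));
      try lra; intros n m t Ht; try apply Hdom, Ht.
    apply is_derive_term. lra. }
  assert (HF1 : is_derive F1 y
    (Series (fun n => Series (fun m => term'' (- a) (z_enum n) (z_enum m) y)))).
  { apply (is_derive_Series_Series (fun n m => term' (- a) (z_enum n) (z_enum m))
      (fun n m => term'' (- a) (z_enum n) (z_enum m)) (dom_const a) rho (17/20) (101/100));
      try lra; intros n m t Ht; try apply Hdom, Ht.
    apply is_derive_term'. lra. }
  assert (HD : is_derive (Derive_n (f_alpha alpha) 1) y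
    (Series (fun n => Series (fun m => term'' (- a) (z_enum n) (z_enum m) y)))).
  { apply (is_derive_ext_loc F1); [|exact HF1].
    apply (filter_imp (fun t => 17/20 < t < 101/100)); [|apply (open_and _ _ (open_gt _) (open_lt _)), Hy].
    intros z Hz. symmetry. apply is_derive_unique, HF, Hz. }
  split; [eexists; exact HD | apply (is_derive_unique _ _ _ HD)].
Qed.

Lemma sqrt3_bounds : 1732/1000 <= sqrt 3 <= 17321/10000.
Proof.
  pose proof (sqrt_sqrt 3 ltac:(lra)). pose proof (sqrt_pos 3). split; nra.
Qed.

Lemma width_bound alpha y : 6 <= alpha ->
  sqrt 3 / 2 <= y <= sqrt 3 / 2 + 1 / (3 * sqrt alpha) ->
  y <= 10022/10000 /\ 9 * alpha * (y - sqrt 3 / 2) ^ 2 <= 1.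
Proof.
  intros Halpha Hy. pose proof sqrt3_bounds.
  pose proof (sqrt_sqrt alpha ltac:(lra)) as Ht. pose proof (sqrt_pos alpha).
  set (t := sqrt alpha) in *.
  assert (Ht0 : 2449/1000 <= t) by nra.
  assert (Hinv : 1 / (3 * t) <= 1000 / 7347).
  { replace (1000 / 7347) with (1 / (7347/1000)) by field.
    unfold Rdiv. rewrite !Rmult_1_l. apply Rinv_le_contravar; lra. }
  split; [lra|].
  assert (Hprod : 3 * t * (y - sqrt 3 / 2) <= 1).
  { replace 1 with (3 * t * (1 / (3 * t))) by (field; lra).
    apply Rmult_le_compat_l; lra. }
  replace (9 * alpha * (y - sqrt 3 / 2) ^ 2) with ((3 * t * (y - sqrt 3 / 2)) ^ 2)
    by (rewrite <- Ht; ring).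
  assert (0 <= 3 * t * (y - sqrt 3 / 2)) by (apply Rmult_le_pos; lra).
  nra.
Qed.

Lemma corner_dominates a : 6 * PI <= a ->
  640 * gap * rho ^ 2 * (2 / (1 - rho) + 1 / (1 - rho) ^ 2) < 3 * (15/100 * a).
Proof.
  intros Ha. pose proof PI_ge_314. pose proof rho_bounds. pose proof gap_bounds.
  assert (Hu : / (1 - rho) <= 100/58)
    by (replace (100/58) with (/ (58/100)) by field; apply Rinv_le_contravar; lra).
  assert (0 < / (1 - rho)) by (apply Rinv_0_lt_compat; lra).
  replace (2 / (1 - rho) + 1 / (1 - rho) ^ 2) with (2 * / (1 - rho) + / (1 - rho) ^ 2)
    by (field; lra).
  assert (/ (1 - rho) ^ 2 <= (100/58) ^ 2)
    by (rewrite <- pow_inv; apply pow_incr; lra).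
  assert (rho ^ 2 <= (42/100) ^ 2) by (apply pow_incr; lra).
  assert (0 < rho ^ 2) by (apply pow_lt; lra).
  assert (0 <= / (1 - rho) ^ 2) by (rewrite <- pow_inv; apply pow_le; lra).
  assert (2 * / (1 - rho) + / (1 - rho) ^ 2 <= 2 * (100/58) + (100/58) ^ 2) by lra.
  assert (rho ^ 2 * (2 * / (1 - rho) + / (1 - rho) ^ 2)
          <= (42/100) ^ 2 * (2 * (100/58) + (100/58) ^ 2))
    by (apply Rmult_le_compat; lra).
  assert (640 * gap * (rho ^ 2 * (2 * / (1 - rho) + / (1 - rho) ^ 2))
          <= 640 * (1/256) * ((42/100) ^ 2 * (2 * (100/58) + (100/58) ^ 2)))
    by (apply Rmult_le_compat; nra).
  lra.
Qed.

Theorem mainTheorem16 (alpha : R) (halpha : 6 <= alpha) (y : R)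
  (hy1 : sqrt 3 / 2 <= y) (hy2 : y <= sqrt 3 / 2 + 1 / (3 * sqrt alpha)) :
  ex_derive_n (f_alpha alpha) 2 y /\ Derive_n (f_alpha alpha) 2 y < 0.
Proof.
  pose proof PI_ge_314. pose proof PI_4. pose proof rho_bounds. pose proof sqrt3_bounds.
  destruct (width_bound alpha y halpha (conj hy1 hy2)) as [Hy Hwidth].
  destruct (f_alpha_derive2 alpha y halpha ltac:(lra)) as [Hex ->].
  split; [exact Hex|].
  set (a := PI * alpha). set (E := exp (- a * phi_main y)).
  assert (Ha : 6 * PI <= a) by (unfold a; nra).
  assert (Hmain : forall n m, main_point (z_enum n) (z_enum m) ->
    term'' (- a) (z_enum n) (z_enum m) y <= - (15/100 * a * E)).
  { intros n m Hnm.
    apply (term''_main_le a (sqrt 3)); [exact Hnm | apply sqrt_sqrt | | | | unfold a]; nra. }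
  apply (Series_Series_lt_0 _ (dom_const a) (E * (640 * gap)) (15/100 * a * E) rho); try lra.
  - intros n m. apply term_derivs_le_geom; lra.
  - intros n m Hnm. apply term_derivs_le_rest; try lra.
    intros Hm. apply main_point_z_enum in Hm. lia.
  - apply Hmain. left. split; reflexivity.
  - apply Hmain. right; right. split; reflexivity.
  - apply Hmain. right; left. split; reflexivity.
  - pose proof (corner_dominates a Ha). assert (0 < E) by apply exp_pos.
    replace (E * (640 * gap) * rho ^ 2 * (2 / (1 - rho) + 1 / (1 - rho) ^ 2))
      with (E * (640 * gap * rho ^ 2 * (2 / (1 - rho) + 1 / (1 - rho) ^ 2))) by ring.
    nra.
Qed.
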